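(* Let $Q$ be a connected quiver with two mutable vertices $1,2$ and at least one frozen vertex, such that $Q^{\mathrm{mut}}$ is mutation-infinite (equivalently $|b_{12}|\ge2$). Let $\mathbf M$ be either of the two infinite reduced mutation sequences $1212\cdots$ or $2121\cdots$. Then there is $T$ such that $Q^{(j)}_{\mathbf M}$ is sign-coherent for all $j>T$.
   Context: A quiver is a finite directed multigraph with no loops and no oriented 2-cycles, whose vertex set is partitioned into mutable and frozen vertices; arrows between two frozen vertices are ignored. $b_{ik}$ = number of arrows $i\to k$ minus number of arrows $k\to i$; $Q^{\mathrm{mut}}$ is the subquiver on the mutable vertices. Mutation $\mu_j$ at mutable $j$: for each path $i\to j\to k$ add $b_{ij}b_{jk}$ arrows $i\to k$, reverse all arrows at $j$, cancel 2-cycles. A mutation sequence $\mathbf M=m_1m_2\cdots$ has $Q^{(0)}_{\mathbf M}=Q$, $Q^{(i)}_{\mathbf M}=\mu_{m_i}(Q^{(i-1)}_{\mathbf M})$. Mutation-infinite means mutation-equivalent to infinitely many distinct quivers. Connected: the mutable part is connected as an undirected graph and every frozen vertex is adjacent to some mutable vertex. A mutable vertex adjacent to at least one frozen vertex is red (resp. green) if all arrows between it and frozen vertices point towards (resp. away from) it; a quiver is sign-coherent if every mutable vertex is red or green. *)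

(* A quiver is encoded by its exchange data b : V -> V -> int,
   b i k = #arrows i->k - #arrows k->i (skew_sym-symmetric), together with the
   predicate of mutable vertices. Entries between two frozen vertices are
   irrelevant (ignored by every notion below). *)
From mathcomp Require Import all_boot all_order all_algebra.
Set Implicit Arguments. Unset Strict Implicit. Unset Printing Implicit Defensive.
Import Order.TTheory GRing.Theory Num.Theory.
Local Open Scope ring_scope.

Definition skew_sym (V : finType) (b : V -> V -> int) : Prop :=
  forall i k, b i k = - b k i.

Definition posp (x : int) : int := Num.max x 0.

(* Quiver mutation at j, in terms of the b-matrix: for every path i -> j -> k
   add b_ij b_jk arrows i -> k, reverse arrows at j, cancel 2-cycles. *)
Definition mutate (V : finType) (b : V -> V -> int) (j : V) : V -> V -> int :=
  fun i k =>
    if (i == j) || (k == j) then - b i k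
    else b i k + posp (b i j) * posp (b j k) - posp (- b i j) * posp (- b j k).

(* Q^(0) = Q, Q^(i) = mu_{m i}(Q^(i-1)); the sequence m is indexed from 1. *)
Fixpoint mutseq (V : finType) (b : V -> V -> int) (m : nat -> V) (i : nat)
  : V -> V -> int :=
  match i with
  | 0%N => b
  | i'.+1 => mutate (mutseq b m i') (m i'.+1)
  end.

Definition adjacent (V : finType) (b : V -> V -> int) (i k : V) : bool :=
  b i k != 0.

Definition mutable_connected (V : finType) (mut : pred V) (b : V -> V -> int) : Prop :=
  forall P : pred V,
    (exists2 x, mut x & P x) -> (exists2 y, mut y & ~~ P y) ->
    exists x y, [/\ mut x, mut y, P x, ~~ P y & adjacent b x y].

Definition connected_quiver (V : finType) (mut : pred V) (b : V -> V -> int) : Prop :=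
  mutable_connected mut b /\
  forall f, ~~ mut f -> exists2 k, mut k & adjacent b f k.

(* red: all arrows between k and frozen vertices point towards k;
   green: all point away from k *)
Definition red (V : finType) (mut : pred V) (b : V -> V -> int) (k : V) : Prop :=
  forall f, ~~ mut f -> 0 <= b f k.
Definition green (V : finType) (mut : pred V) (b : V -> V -> int) (k : V) : Prop :=
  forall f, ~~ mut f -> b f k <= 0.

Definition sign_coherent (V : finType) (mut : pred V) (b : V -> V -> int) : Prop :=
  forall k, mut k -> (exists2 f, ~~ mut f & adjacent b f k) ->
    red mut b k \/ green mut b k.

(* the alternating sequence a b a b ... (m_1 = a) *)
Definition alt_seq (V : finType) (a c : V) : nat -> V :=
  fun i => if odd i then a else c.

From mathcomp Require Import all_boot all_order all_algebra zify.
Import Order.TTheory GRing.Theory Num.Theory.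
Local Open Scope ring_scope.
Set Implicit Arguments. Unset Strict Implicit. Unset Printing Implicit Defensive.

(* Along 1212..., write p for the vertex about to be mutated, q for the other
   mutable vertex, and n = |b_12| >= 2; after replacing b by -b we may assume
   b_pq = n at every step.  For a frozen vertex f the pair (b_fp, b_fq) then
   evolves by the piecewise-linear map F(x, y) = (y + n max(x, 0), -x).  The
   region x > 0 > y, x + y >= 0 is F-invariant and every nonzero orbit enters
   it; there b_fp > 0 > b_fq, i.e. p is red and q is green for every f. *)

Lemma posp_id (x : int) : 0 <= x -> posp x = x.
Proof. by move=> x_ge0; rewrite /posp max_l. Qed.

Lemma posp_eq0 (x : int) : x <= 0 -> posp x = 0.
Proof. by move=> x_le0; rewrite /posp max_r. Qed.

Section FrozenDynamics.

Variable n : int.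
Hypothesis n_ge2 : 2 <= n.

Definition frozen_step (p : int * int) : int * int := (p.2 + n * posp p.1, - p.1).

Definition stable (p : int * int) : Prop := [/\ 0 < p.1, p.2 < 0 & 0 <= p.1 + p.2].

Definition reaches_stable (p : int * int) : Prop :=
  exists t, stable (iter t frozen_step p).

Lemma stable_step p : stable p -> stable (frozen_step p).
Proof.
case: p => x y; rewrite /stable /frozen_step /= => -[x_gt0 y_lt0 xy_ge0].
by rewrite posp_id; [split; nia | lia].
Qed.

Lemma reaches_stable_step p : reaches_stable (frozen_step p) -> reaches_stable p.
Proof. by case=> t st; exists t.+1; rewrite iterSr. Qed.

Lemma reaches_stable_pos x y : 0 < x -> 0 <= y -> reaches_stable (x, y).
Proof.
move=> x_gt0 y_ge0; apply: reaches_stable_step; exists 0%N.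
by rewrite /stable /frozen_step /= posp_id; [split; nia | lia].
Qed.

Lemma reaches_stable_axis y : 0 < y -> reaches_stable (0, y).
Proof.
move=> y_gt0; apply: reaches_stable_step.
by rewrite /frozen_step /= posp_id // mulr0 addr0 oppr0; apply: reaches_stable_pos.
Qed.

Lemma reaches_stable_nonpos x y :
  x <= 0 -> (x, y) != (0, 0) -> reaches_stable (x, y).
Proof.
move=> x_le0 xy_neq0; apply: reaches_stable_step.
rewrite /frozen_step /= posp_eq0 // mulr0 addr0.
have [y_gt0 | y_le0] := ltrP 0 y; first by apply: reaches_stable_pos; lia.
have [y0 | y_lt0] := eqVneq y 0.
  rewrite y0 xpair_eqE eqxx andbT in xy_neq0 *.
  by apply: reaches_stable_axis; move: xy_neq0 => /eqP; lia.
apply: reaches_stable_step; rewrite /frozen_step /= posp_eq0; last by lia.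
rewrite mulr0 addr0.
have [x0 | x_lt0] := eqVneq x 0; first by rewrite x0 oppr0; apply: reaches_stable_axis; lia.
by apply: reaches_stable_pos; lia.
Qed.

(* Induction on |y|: from 0 < x < -y, F lands either in the half-plane x <= 0
   or at a point whose second coordinate -x is smaller in absolute value. *)
Lemma reaches_stable_nonzero p : p != (0, 0) -> reaches_stable p.
Proof.
case: p => x y; move: {2}`|y|%N (leqnn `|y|%N) => N.
elim: N x y => [|N IH] x y y_small xy_neq0.
  have [x_le0 | x_gt0] := lerP x 0; first exact: reaches_stable_nonpos.
  by apply: reaches_stable_pos; lia.
have [x_le0 | x_gt0] := lerP x 0; first exact: reaches_stable_nonpos.
have [y_ge0 | y_lt0] := lerP 0 y; first exact: reaches_stable_pos.
have [xy_ge0 | xy_lt0] := lerP 0 (x + y); first by exists 0%N; split.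
apply: reaches_stable_step; rewrite /frozen_step /= posp_id; last by lia.
have [y'_le0 | y'_gt0] := lerP (y + n * x) 0.
  by apply: reaches_stable_nonpos => //; rewrite xpair_eqE negb_and; apply/orP; right; lia.
by apply: IH; [lia | rewrite xpair_eqE negb_and; apply/orP; right; lia].
Qed.

Lemma frozen_orbit_eventually_signed p : exists T, forall t, (T <= t)%N ->
  0 <= (iter t frozen_step p).1 /\ (iter t frozen_step p).2 <= 0.
Proof.
have [p0 | p_neq0] := eqVneq p (0, 0).
  exists 0%N => t _; suff -> : iter t frozen_step p = (0, 0) by [].
  elim: t => [|t IH] //=; rewrite IH /frozen_step /= posp_id //.
  by rewrite mulr0 addr0 oppr0.
have [T st] := reaches_stable_nonzero p_neq0.
exists T => t le_Tt; rewrite -(subnK le_Tt) iterD.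
suff [x_gt0 y_lt0 _] : stable (iter (t - T) frozen_step (iter T frozen_step p)).
  by split; apply: ltW.
by elim: (t - T)%N => [|k IH] //=; apply: stable_step.
Qed.

End FrozenDynamics.

Section Mutation.

Variable V : finType.
Implicit Types (b : V -> V -> int) (m : nat -> V).

Lemma mutate_skew b j : skew_sym b -> skew_sym (mutate b j).
Proof.
move=> b_skew i k; rewrite /mutate [(k == j) || _]orbC.
case: ((i == j) || (k == j)); first by rewrite b_skew.
by rewrite [b k i]b_skew [b k j]b_skew [b j i]b_skew !opprK; lia.
Qed.

Lemma mutseq_skew b m j : skew_sym b -> skew_sym (mutseq b m j).
Proof. by move=> b_skew; elim: j => [|j IH] //=; apply: mutate_skew. Qed.

Lemma mutseq_opp b m j i k :
  mutseq (fun i k => - b i k) m j i k = - mutseq b m j i k.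
Proof.
elim: j i k => [|j IH] i k //=; rewrite /mutate !IH.
by case: ((i == m j.+1) || (k == m j.+1)); rewrite ?opprK; lia.
Qed.

Lemma sign_coherent_opp (mut : pred V) b b' :
  (forall i k, b' i k = - b i k) -> sign_coherent mut b -> sign_coherent mut b'.
Proof.
move=> b'E coh k mut_k [f frozen_f adj_fk].
have [|red_k | green_k] := coh k mut_k.
- by exists f; rewrite // /adjacent -oppr_eq0 -b'E.
- by right=> g frozen_g; rewrite b'E oppr_le0; apply: red_k.
- by left=> g frozen_g; rewrite b'E oppr_ge0; apply: green_k.
Qed.

Lemma mutate_entry_nonneg b j i k : i != j -> k != j -> 0 <= b j k ->
  mutate b j i k = b i k + b j k * posp (b i j).
Proof.
move=> ij kj bjk_ge0; rewrite /mutate (negbTE ij) (negbTE kj) /=.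
by rewrite (posp_id bjk_ge0) (@posp_eq0 (- b j k)) ?oppr_le0 // mulr0 subr0 mulrC.
Qed.

Variables (a c : V).
Hypothesis a_neq_c : a != c.
Local Notation m := (alt_seq a c).

Lemma alt_seqSS j : m j.+2 = m j.
Proof. by rewrite /alt_seq /= negbK. Qed.

Lemma alt_seqS_neq j : m j.+1 != m j.
Proof. by rewrite /alt_seq /=; case: (odd j); rewrite // eq_sym. Qed.

Lemma mutseq_alt_mutable b j : skew_sym b ->
  mutseq b m j (m j.+1) (m j) = b a c.
Proof.
move=> b_skew; elim: j => [|j IH] //=.
by rewrite alt_seqSS {1}/mutate eqxx orbT -(mutseq_skew _ _ b_skew).
Qed.

Lemma mutseq_alt_frozen b f : skew_sym b -> 0 <= b a c -> f != a -> f != c ->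
  forall j, (mutseq b m j f (m j.+1), mutseq b m j f (m j))
            = iter j (frozen_step (b a c)) (b f a, b f c).
Proof.
move=> b_skew bac_ge0 fa fc; elim=> [|j IH] //=.
have f_neq j' : f != m j' by rewrite /alt_seq; case: (odd j').
rewrite -IH /frozen_step /= alt_seqSS -(mutseq_alt_mutable j b_skew).
rewrite (mutate_entry_nonneg (f_neq _)) ?mutseq_alt_mutable // 1?eq_sym ?alt_seqS_neq //.
by rewrite {1}/mutate eqxx orbT.
Qed.

Lemma alt_mutseq_eventually_sign_coherent (mut : pred V) b :
  (forall v, mut v = (v == a) || (v == c)) -> skew_sym b -> 2 <= `|b a c| ->
  exists T, forall j, (T <= j)%N -> sign_coherent mut (mutseq b m j).
Proof.
move=> mutE b_skew n_ge2.
wlog bac_ge0 : b b_skew n_ge2 / 0 <= b a c => [wlog_pos|].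
  have [bac_ge0 | bac_lt0] := lerP 0 (b a c); first exact: wlog_pos.
  have neg_skew : skew_sym (fun i k => - b i k) by move=> i k; rewrite b_skew.
  have [T HT] : exists T, forall j, (T <= j)%N ->
      sign_coherent mut (mutseq (fun i k => - b i k) m j).
    by apply: wlog_pos; rewrite ?normrN // oppr_ge0 ltW.
  exists T => j le_Tj; apply: sign_coherent_opp (HT j le_Tj) => i k.
  by rewrite mutseq_opp opprK.
have frozen_signed f : exists T, ~~ mut f -> forall t, (T <= t)%N ->
    0 <= mutseq b m t f (m t.+1) /\ mutseq b m t f (m t) <= 0.
  have [mut_f | frozen_f] := boolP (mut f); first by exists 0%N.
  move: frozen_f; rewrite mutE negb_or => /andP[fa fc].
  have bac_ge2 : 2 <= b a c by rewrite -(ger0_norm bac_ge0).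
  have [T HT] := frozen_orbit_eventually_signed bac_ge2 (b f a, b f c).
  by exists T => _ t /HT; rewrite -(mutseq_alt_frozen b_skew).
have [T HT] := fin_all_exists frozen_signed.
exists (\max_f T f) => j le_Tj k mut_k _.
have signed f : ~~ mut f ->
    0 <= mutseq b m j f (m j.+1) /\ mutseq b m j f (m j) <= 0.
  by move=> frozen_f; apply: HT => //; apply: leq_trans le_Tj; apply: leq_bigmax.
have /orP[/eqP -> | /eqP ->] : (k == m j.+1) || (k == m j).
  by move: mut_k; rewrite mutE /alt_seq /=; case: (odd j) => //; rewrite orbC.
- by left=> f /signed[].
- by right=> f /signed[].
Qed.

End Mutation.

Theorem mainTheorem19 (V : finType) (v1 v2 : V) (b : V -> V -> int)
  (a c : V) :
  v1 != v2 ->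
  skew_sym b ->
  (exists f : V, (f != v1) && (f != v2)) ->
  connected_quiver (fun v => (v == v1) || (v == v2)) b ->
  (2%:Z <= Num.norm (b v1 v2)) ->
  (a, c) = (v1, v2) \/ (a, c) = (v2, v1) ->
  exists T : nat, forall j : nat, (T < j)%N ->
    sign_coherent (fun v => (v == v1) || (v == v2)) (mutseq b (alt_seq a c) j).
Proof.
move=> v12 b_skew _ _ n_ge2 ac_eq.
have [T HT] : exists T, forall j, (T <= j)%N ->
    sign_coherent (fun v => (v == v1) || (v == v2)) (mutseq b (alt_seq a c) j).
  case: ac_eq => -[-> ->]; apply: alt_mutseq_eventually_sign_coherent => //.
  - by rewrite eq_sym.
  - by move=> v; rewrite orbC.
  - by rewrite b_skew normrN.
by exists T => j /ltnW; apply: HT.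
Qed.
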